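(* Let $\theta>0$, $\lambda>0$, $\mu>0$ with $\lambda<\mu+1$. For $\alpha\ge 0$, $d\ge 0$ let $$\pi(\alpha,d)=(\theta+\mu)\alpha-\frac{\alpha^2}{2}-\frac{\alpha}{\alpha+d}\,\lambda\alpha\theta-d ,$$ and for $\alpha>0$ let $\Pi(\alpha;\theta)=\max_{d\ge 0}\pi(\alpha,d)$. Then the optimal deployment $\alpha^*(\theta)$ maximizing $\Pi(\cdot;\theta)$ is $$\alpha^*(\theta)=\begin{cases}\mu+\theta(1-\lambda), & \lambda\theta\le 1,\\ \theta+\mu+1-2\sqrt{\lambda\theta}, & \lambda\theta>1,\end{cases}$$ with $\alpha^*(\theta)>0$ for all $\theta>0$. The two expressions coincide at $\theta=1/\lambda$.
   Context: $\alpha$ is AI deployment, $d$ security investment, $\theta$ AI capability, $\lambda$ conditional breach-loss magnitude, $\mu$ complementary organizational readiness. Breach probability is $p(\alpha,d)=\alpha/(\alpha+d)$ and breach damage is $\lambda\alpha\theta$. *)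

From Stdlib Require Import Reals Lra.
Open Scope R_scope.

Definition profit (theta lambda mu alpha d : R) : R :=
  (theta + mu) * alpha - alpha ^ 2 / 2
  - alpha / (alpha + d) * (lambda * alpha * theta) - d.

Definition is_max_value (S : R -> Prop) (f : R -> R) (v : R) : Prop :=
  (exists x, S x /\ f x = v) /\ (forall x, S x -> f x <= v).

Definition is_Pi (theta lambda mu alpha v : R) : Prop :=
  is_max_value (fun d => 0 <= d) (profit theta lambda mu alpha) v.

Definition alpha_star (theta lambda mu : R) : R :=
  if Rle_dec (lambda * theta) 1 then mu + theta * (1 - lambda)
  else theta + mu + 1 - 2 * sqrt (lambda * theta).

(** With [k = lambda * theta] and [s = alpha + d], the breach loss plus the
    security spending is [k alpha^2 / s + s - alpha], to be minimized over
    [s >= alpha].  Its unconstrained minimizer is [s = alpha sqrt k], so the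
    minimum equals [alpha * r k] ([r = min_cost_rate]) with [r k = k] when [k <= 1] (corner [d = 0])
    and [r k = 2 sqrt k - 1] otherwise.  Hence [Pi(alpha) = (theta + mu - r k)
    alpha - alpha^2 / 2] is a concave parabola whose unique maximizer is
    [theta + mu - r k], which is exactly [alpha_star]; it is positive because
    [lambda < mu + 1] and [2 sqrt (lambda theta) <= lambda + theta]. *)

From Stdlib Require Import Reals Lra.
Open Scope R_scope.

Definition breach_cost (k alpha d : R) : R := alpha / (alpha + d) * (k * alpha) + d.

Definition min_cost_rate (k : R) : R :=
  if Rle_dec k 1 then k else 2 * sqrt k - 1.

Lemma profit_breach_cost theta lambda mu alpha d :
  profit theta lambda mu alpha d
  = (theta + mu) * alpha - alpha ^ 2 / 2 - breach_cost (lambda * theta) alpha d.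
Proof. unfold profit, breach_cost. ring. Qed.

Lemma breach_cost_ge k alpha d : 0 < alpha -> 0 <= k -> 0 <= d ->
  alpha * min_cost_rate k <= breach_cost k alpha d.
Proof.
  intros Ha Hk Hd. unfold min_cost_rate, breach_cost.
  apply Rmult_le_reg_r with (alpha + d); [lra|].
  replace ((alpha / (alpha + d) * (k * alpha) + d) * (alpha + d))
    with (k * alpha ^ 2 + d * (alpha + d)) by (field; lra).
  destruct (Rle_dec k 1) as [Hk1 | Hk1].
  - assert (0 <= d * (d + alpha * (1 - k))) by (apply Rmult_le_pos; nra). nra.
  - pose proof (sqrt_sqrt k Hk) as Hsq.
    (* the gap is the square [(alpha + d - alpha * sqrt k)^2] *)
    pose proof (pow2_ge_0 (alpha + d - alpha * sqrt k)). nra.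
Qed.

Lemma breach_cost_min_attained k alpha : 0 < alpha -> 0 <= k ->
  exists d, 0 <= d /\ breach_cost k alpha d = alpha * min_cost_rate k.
Proof.
  intros Ha Hk. unfold min_cost_rate, breach_cost.
  destruct (Rle_dec k 1) as [Hk1 | Hk1].
  - exists 0. split; [lra|]. field. lra.
  - pose proof (sqrt_sqrt k Hk) as Hsq.
    assert (Hs1 : 1 < sqrt k) by (rewrite <- sqrt_1; apply sqrt_lt_1; lra).
    exists (alpha * (sqrt k - 1)). split; [nra|].
    replace (alpha + alpha * (sqrt k - 1)) with (alpha * sqrt k) by ring.
    replace (k * alpha) with (sqrt k * sqrt k * alpha) by (rewrite Hsq; ring).
    field. lra.
Qed.

Lemma is_max_value_unique (S : R -> Prop) (f : R -> R) v w :
  is_max_value S f v -> is_max_value S f w -> v = w.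
Proof.
  intros [[x [Sx <-]] Hv] [[y [Sy <-]] Hw].
  specialize (Hv y Sy). specialize (Hw x Sx). lra.
Qed.

Lemma is_Pi_parabola theta lambda mu alpha :
  0 < theta -> 0 < lambda -> 0 < alpha ->
  is_Pi theta lambda mu alpha
    ((theta + mu - min_cost_rate (lambda * theta)) * alpha - alpha ^ 2 / 2).
Proof.
  intros Ht Hl Ha. assert (Hk : 0 <= lambda * theta) by nra.
  split.
  - destruct (breach_cost_min_attained _ _ Ha Hk) as [d [Hd Hcost]].
    exists d. split; [exact Hd|].
    rewrite profit_breach_cost, Hcost. ring.
  - intros d Hd. rewrite profit_breach_cost.
    pose proof (breach_cost_ge _ _ _ Ha Hk Hd). lra.
Qed.

Lemma parabola_strict_max c x : x <> c -> c * x - x ^ 2 / 2 < c * c - c ^ 2 / 2.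
Proof.
  intros Hxc. assert (Hsq : 0 < Rsqr (x - c)) by (apply Rsqr_pos_lt; lra).
  unfold Rsqr in Hsq. nra.
Qed.

Lemma alpha_star_min_cost_rate theta lambda mu :
  alpha_star theta lambda mu = theta + mu - min_cost_rate (lambda * theta).
Proof. unfold alpha_star, min_cost_rate. destruct (Rle_dec (lambda * theta) 1); ring. Qed.

Lemma two_sqrt_mul_le_add x y : 0 <= x -> 0 <= y -> 2 * sqrt (x * y) <= x + y.
Proof.
  intros Hx Hy. pose proof (sqrt_pos (x * y)).
  pose proof (sqrt_sqrt (x * y) ltac:(nra)).
  pose proof (pow2_ge_0 (x - y)). nra.
Qed.

Lemma alpha_star_pos theta lambda mu :
  0 < lambda -> 0 < mu -> lambda < mu + 1 -> 0 < theta ->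
  0 < alpha_star theta lambda mu.
Proof.
  intros Hl Hm Hlm Ht. unfold alpha_star.
  destruct (Rle_dec (lambda * theta) 1) as [Hk | Hk].
  - destruct (Rle_or_lt lambda 1) as [Hl1 | Hl1]; [nra|].
    (* [lambda > 1] forces [theta < 1], so [theta (lambda - 1) < lambda - 1 < mu] *)
    assert (theta < 1) by nra. nra.
  - pose proof (two_sqrt_mul_le_add lambda theta ltac:(lra) ltac:(lra)). lra.
Qed.

Theorem proposition1 (lambda mu : R) :
  0 < lambda -> 0 < mu -> lambda < mu + 1 ->
  (forall theta : R, 0 < theta ->
     (* alpha* is positive *)
     0 < alpha_star theta lambda mu /\
     (* Pi(alpha; theta) = max_{d>=0} pi(alpha,d) exists for every alpha > 0 *)
     (forall alpha, 0 < alpha -> exists v, is_Pi theta lambda mu alpha v) /\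
     (* alpha* is the (unique) maximizer of Pi(.; theta) over alpha > 0 *)
     (forall alpha v vstar, 0 < alpha -> alpha <> alpha_star theta lambda mu ->
        is_Pi theta lambda mu alpha v ->
        is_Pi theta lambda mu (alpha_star theta lambda mu) vstar ->
        v < vstar)) /\
  (* the two branches coincide at theta = 1/lambda *)
  mu + (/ lambda) * (1 - lambda) = / lambda + mu + 1 - 2 * sqrt (lambda * / lambda).
Proof.
  intros Hl Hm Hlm. split.
  - intros theta Ht.
    pose proof (alpha_star_pos theta lambda mu Hl Hm Hlm Ht) as Hpos.
    split; [exact Hpos|]. split.
    + intros alpha Ha. eexists. exact (is_Pi_parabola theta lambda mu alpha Ht Hl Ha).
    + intros alpha v vstar Ha Hne Hv Hvs.
      rewrite (is_max_value_unique _ _ _ _ Hv (is_Pi_parabola _ _ _ _ Ht Hl Ha)).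
      rewrite (is_max_value_unique _ _ _ _ Hvs (is_Pi_parabola _ _ _ _ Ht Hl Hpos)).
      rewrite alpha_star_min_cost_rate in *.
      apply parabola_strict_max, Hne.
  - rewrite Rinv_r, sqrt_1 by lra. field. lra.
Qed.
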